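(* Let $X$ be a nontrivial real Banach space. The following assertions are equivalent: (i) $X^*$ has the weak$^*$ local diameter $2$ property; (ii) $X$ is locally octahedral; (iii) for every $x\in S_X$, every $\alpha\in[-1,1]$, every $\varepsilon>0$, and every $\varepsilon_0\in(0,\varepsilon)$, there is a $y\in S_X$ such that, whenever $|\gamma|\leq 1+\varepsilon_0$, there is a $y^*\in X^*$ satisfying $y^*(x)=\alpha$, $y^*(y)=\gamma$, and $\|y^*\|\leq 1+\varepsilon$; (iii') for every $x\in S_X$, every $\alpha\in[-1,1]$, and every $\varepsilon>0$, there are $y\in S_X$ and $x_1^*,x_2^*\in X^*$ satisfying $x_1^*(x)=x_2^*(x)=\alpha$, $x_1^*(y)-x_2^*(y)>2-\varepsilon$, and $\|x_1^*\|,\|x_2^*\|\leq 1+\varepsilon$; (iii'') for every $x\in S_X$ and every $\varepsilon>0$, there are $y\in S_X$ and $x_1^*,x_2^*\in X^*$ satisfying $x_1^*(x)=x_2^*(x)=1$, $x_1^*(y)-x_2^*(y)>2-\varepsilon$, and $\|x_1^*\|,\|x_2^*\|\leq 1+\varepsilon$.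
   Context: $B_Z$, $S_Z$ denote the closed unit ball and unit sphere of a Banach space $Z$. A weak$^*$ slice of $B_{X^*}$ is a set of the form $\{x^*\in B_{X^*}: x^*(x)>1-\alpha\}$ with $x\in S_X$ and $\alpha>0$. $X^*$ has the weak$^*$ local diameter $2$ property if every weak$^*$ slice of $B_{X^*}$ has diameter $2$. $X$ is locally octahedral if for every $x\in X$ and every $\varepsilon>0$ there is a $y\in S_X$ such that $\|sx+y\|\geq(1-\varepsilon)(|s|\|x\|+\|y\|)$ for all $s\in\mathbb{R}$. *)

From HB Require Import structures.
From mathcomp Require Import all_boot all_order all_algebra.
From mathcomp Require Import all_classical all_reals topology normedtype.
Set Implicit Arguments. Unset Strict Implicit. Unset Printing Implicit Defensive.
Import Order.TTheory GRing.Theory Num.Theory.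
Import numFieldNormedType.Exports.
Local Open Scope classical_set_scope.
Local Open Scope ring_scope.

Section Dual.
Variables (R : realType) (X : normedModType R).

Definition is_dual (f : X -> R) : Prop :=
  (forall (a : R) (x y : X), f (a *: x + y) = a * f x + f y) /\ continuous f.

Definition dnorm (f : X -> R) : R :=
  sup [set `|f x| | x in [set x : X | `|x| <= 1]].

Definition wstar_slice (x : X) (alpha : R) : set (X -> R) :=
  [set f | is_dual f /\ dnorm f <= 1 /\ 1 - alpha < f x].

Definition dual_diam (A : set (X -> R)) : R :=
  sup [set r | exists f g, A f /\ A g /\ r = dnorm (fun z => f z - g z)].

Definition wstar_LD2P : Prop :=
  forall (x : X) (alpha : R), `|x| = 1 -> 0 < alpha ->
    dual_diam (wstar_slice x alpha) = 2.

Definition locally_octahedral : Prop :=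
  forall (x : X) (eps : R), 0 < eps ->
    exists y : X, `|y| = 1 /\
      forall s : R, (1 - eps) * (`|s| * `|x| + `|y|) <= `|s *: x + y|.

End Dual.

(* Local octahedrality gives, for each unit vector x, unit vectors y with
   ‖s x + t y‖ ≥ d (|s| + |t|) and d close to 1; Hahn–Banach then extends any values
   alpha at x and gamma at y to a functional of norm at most max(|alpha|, |gamma|) / d,
   which is (iii).  Taking gamma = ±1 gives the pair of (iii'), which specialises to (iii'').
   Dividing the pair of (iii') for alpha = 1 by 1 + eps puts both functionals in a thin
   weak* slice at x while they stay almost 2 apart at y, so weak* slices have diameter 2.
   Conversely, two functionals of a thin slice at x that are almost 2 apart, renormalised
   to take the value 1 at x, give (iii''); testing s x + y against the first (s ≥ 0) or
   against minus the second (s < 0) yields ‖s x + y‖ ≥ (1 - eps) (|s| + 1). *)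

From HB Require Import structures.
From mathcomp Require Import all_boot all_order all_algebra.
From mathcomp Require Import all_classical all_reals topology normedtype.
From mathcomp Require Import ring lra.
Set Implicit Arguments. Unset Strict Implicit. Unset Printing Implicit Defensive.
Import Order.TTheory GRing.Theory Num.Theory.
Import numFieldNormedType.Exports.
Local Open Scope classical_set_scope.
Local Open Scope ring_scope.

Section DualNorm.
Context {R : realType} {X : normedModType R}.
Implicit Types (f g : X -> R) (x y : X) (M : R).

Definition linear_form f := forall (a : R) x y, f (a *: x + y) = a * f x + f y.

Lemma linear_form0 f : linear_form f -> f 0 = 0.
Proof. by move=> L; have := L 1 0 0; rewrite scale1r addr0 mul1r; lra. Qed.

Lemma linear_formZ f a x : linear_form f -> f (a *: x) = a * f x.
Proof. by move=> L; rewrite -[a *: x]addr0 L linear_form0 // addr0. Qed.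

Lemma linear_formD f x y : linear_form f -> f (x + y) = f x + f y.
Proof. by move=> L; have := L 1 x y; rewrite scale1r mul1r. Qed.

Lemma linear_formN f x : linear_form f -> f (- x) = - f x.
Proof. by move=> L; rewrite -scaleN1r linear_formZ // mulN1r. Qed.

Lemma linear_formB f x y : linear_form f -> f (x - y) = f x - f y.
Proof. by move=> L; rewrite linear_formD // linear_formN. Qed.

Lemma normr_normalize x : x != 0 -> `| `|x|^-1 *: x| = 1.
Proof. by move=> x0; rewrite normrZ normfV normr_id mulVf // normr_eq0. Qed.

Lemma bounded_linear_continuous f M : linear_form f -> 0 <= M ->
  (forall x, `|f x| <= M * `|x|) -> continuous f.
Proof.
move=> L M0 B x; apply/cvgrPdist_lt => e e0.
have M1 : 0 < M + 1 by rewrite ltr_wpDl.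
apply/nbhs_normP; exists (e / (M + 1)) => /=; first by rewrite divr_gt0.
move=> t /=; rewrite ltr_pdivlMr // => xt.
rewrite -linear_formB //; apply: le_lt_trans (B _) _.
by apply: le_lt_trans xt; rewrite [leRHS]mulrC ler_wpM2r // lerDl.
Qed.

Lemma is_dual_ball_bounded f : is_dual f ->
  exists M, forall x, `|x| <= 1 -> `|f x| <= M.
Proof.
move=> [L /(_ 0)/cvgrPdist_le/(_ 1 ltr01)/nbhs_normP [d /= d0 Hd]].
exists (2 / d) => x x1.
have d2 : 0 <= d / 2 by lra.
have : `|f 0 - f ((d / 2) *: x)| <= 1.
  apply: Hd => /=; rewrite sub0r normrN normrZ ger0_norm //.
  by apply: le_lt_trans (ler_wpM2l d2 x1) _; lra.
rewrite linear_form0 // linear_formZ // sub0r normrN normrM ger0_norm //.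
by rewrite ler_pdivlMr // => H; lra.
Qed.

Lemma dnorm_le f M : (forall x, `|x| <= 1 -> `|f x| <= M) -> dnorm f <= M.
Proof.
move=> B; apply: ge_sup; first by exists `|f 0|, 0; rewrite //= normr0.
by move=> _ [x /= x1 <-]; apply: B.
Qed.

Lemma le_dnorm f x : is_dual f -> `|x| <= 1 -> `|f x| <= dnorm f.
Proof.
move=> /is_dual_ball_bounded [M HM] x1.
by apply: ub_le_sup; [exists M => _ [z /= z1 <-]; apply: HM | exists x].
Qed.

Lemma dnorm_ge0 f : is_dual f -> 0 <= dnorm f.
Proof. by move=> D; apply: le_trans (le_dnorm (x := 0) D _); rewrite ?normr0. Qed.

Lemma ler_dnorm f x : is_dual f -> `|f x| <= dnorm f * `|x|.
Proof.
move=> D; have [->|x0] := eqVneq x 0.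
  by case: D => L _; rewrite linear_form0 // !normr0 mulr0.
have nx : 0 < `|x| by rewrite normr_gt0.
have u1 : `| `|x|^-1 *: x| <= 1 by rewrite normr_normalize.
have := le_dnorm D u1; case: D => L _.
by rewrite linear_formZ // normrM normfV normr_id ler_pdivrMl // mulrC.
Qed.

Lemma dual_unit_bound f x M : is_dual f -> dnorm f <= M -> `|x| = 1 -> `|f x| <= M.
Proof. by move=> D fM x1; apply: le_trans (ler_dnorm x D) _; rewrite x1 mulr1. Qed.

Lemma bounded_linear_dual f M : linear_form f -> 0 <= M ->
  (forall x, `|f x| <= M * `|x|) -> is_dual f /\ dnorm f <= M.
Proof.
move=> L M0 B; split; first by split => //; apply: bounded_linear_continuous B.
apply: dnorm_le => x x1; apply: le_trans (B x) _.
by rewrite -[leRHS]mulr1 ler_wpM2l.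
Qed.

Lemma dual_divr f k : is_dual f -> 0 < k ->
  is_dual (fun z => f z / k) /\ dnorm (fun z => f z / k) <= dnorm f / k.
Proof.
move=> D k0; have [L _] := D; apply: bounded_linear_dual.
- by move=> a u v /=; rewrite L mulrDl mulrA.
- by rewrite divr_ge0 ?dnorm_ge0 // ltW.
- move=> u; rewrite normrM normfV (gtr0_norm k0) mulrAC.
  by rewrite ler_pM2r ?invr_gt0 // ler_dnorm.
Qed.

Lemma dualB f g : is_dual f -> is_dual g ->
  is_dual (fun z => f z - g z) /\ dnorm (fun z => f z - g z) <= dnorm f + dnorm g.
Proof.
move=> Df Dg; have [Lf _] := Df; have [Lg _] := Dg; apply: bounded_linear_dual.
- by move=> a u v /=; rewrite Lf Lg; ring.
- by rewrite addr_ge0 ?dnorm_ge0.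
- move=> u; apply: le_trans (ler_normB _ _) _.
  by rewrite mulrDl lerD ?ler_dnorm.
Qed.

Lemma dnorm_gt_unit f a : is_dual f -> 0 <= a -> a < dnorm f ->
  exists y, `|y| = 1 /\ a < f y.
Proof.
move=> D a0 af; have [L _] := D.
have [|_ [x /= x1 <-] ax] := sup_gt _ af; first by exists `|f 0|, 0; rewrite //= normr0.
have [z [z1 az]] : exists z, `|z| <= 1 /\ a < f z.
  have [fx0|fx0] := leP 0 (f x); first by exists x; rewrite -(ger0_norm fx0).
  by exists (- x); rewrite normrN linear_formN // -(ltr0_norm fx0).
have z0 : z != 0 by apply: contraTneq az => ->; rewrite linear_form0 // -leNgt.
have nz : 0 < `|z| by rewrite normr_gt0.
exists (`|z|^-1 *: z); split; first exact: normr_normalize.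
by rewrite linear_formZ // mulrC ltr_pdivlMr //; nra.
Qed.

End DualNorm.

Section HahnBanach.
Context {R : realType} {X : normedModType R} (C : R).
Hypothesis C_ge0 : 0 <= C.
Implicit Types (G : set (X * R)) (u v z : X) (r s : R).

(* Partial functionals bounded by [C * `|.|] are handled through their graphs, so that
   chains of extensions can be joined by union in Zorn's lemma. *)
Definition dominated_graph G :=
  [/\ forall a u r v s, G (u, r) -> G (v, s) -> G (a *: u + v, a * r + s),
      forall u r s, G (u, r) -> G (u, s) -> r = s &
      forall u r, G (u, r) -> r <= C * `|u|].

Lemma dominated_graphZ G a u r : dominated_graph G -> G (0, 0) -> G (u, r) ->
  G (a *: u, a * r).
Proof. by move=> [Gcl _ _] G00 Gu; have := Gcl a _ _ _ _ Gu G00; rewrite !addr0. Qed.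

(* The admissible values [c] at [z] of a one-step extension. *)
Lemma dominated_graph_gap G z : dominated_graph G -> G (0, 0) ->
  exists c, forall u r, G (u, r) -> r - C * `|u - z| <= c /\ c <= C * `|u + z| - r.
Proof.
move=> [Gcl _ Gdom] G00.
have gap u r v s : G (u, r) -> G (v, s) -> r - C * `|u - z| <= C * `|v + z| - s.
  move=> Gu Gv; have := Gdom _ _ (Gcl 1 _ _ _ _ Gu Gv); rewrite scale1r mul1r.
  have : `|u + v| <= `|u - z| + `|v + z|.
    by rewrite -[u + v](_ : (u - z) + (v + z) = u + v) ?ler_normD // addrCA subrK addrC.
  by move=> /(ler_wpM2l C_ge0); lra.
pose A := [set p.2 - C * `|p.1 - z| | p in G].
have A0 : A !=set0 by exists (0 - C * `|0 - z|), (0, 0).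
exists (sup A) => u r Gu; split.
  by apply: ub_le_sup; [exists (C * `|0 + z| - 0) => _ [[v s] Gv <-]; apply: gap|exists (u, r)].
by apply: ge_sup => // _ [[v s] Gv <-]; apply: gap.
Qed.

Lemma dominated_gap_step G z c u r t : dominated_graph G -> G (0, 0) ->
  (forall u r, G (u, r) -> r - C * `|u - z| <= c /\ c <= C * `|u + z| - r) ->
  G (u, r) -> r + t * c <= C * `|u + t *: z|.
Proof.
move=> DG G00 Hc Gu; have [->|t0] := eqVneq t 0.
  by rewrite scale0r mul0r !addr0; case: DG => _ _; apply.
have [tp|tn] := ltP 0 t.
  have [_] := Hc _ _ (dominated_graphZ t^-1 DG G00 Gu).
  have -> : t^-1 *: u + z = t^-1 *: (u + t *: z).
    by rewrite scalerDr scalerA mulVf // scale1r.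
  rewrite normrZ gtr0_norm ?invr_gt0 // -(ler_pM2l tp).
  have -> : t * (C * (t^-1 * `|u + t *: z|) - t^-1 * r) = C * `|u + t *: z| - r.
    by field.
  lra.
have tp : 0 < - t by rewrite oppr_gt0 lt_neqAle t0.
have [+ _] := Hc _ _ (dominated_graphZ (- t)^-1 DG G00 Gu).
have -> : (- t)^-1 *: u - z = (- t)^-1 *: (u + t *: z).
  by rewrite scalerDr scalerA invrN mulNr mulVf // scaleN1r.
rewrite normrZ gtr0_norm ?invr_gt0 // -(ler_pM2l tp).
have -> : - t * ((- t)^-1 * r - C * ((- t)^-1 * `|u + t *: z|)) = r - C * `|u + t *: z|.
  by field.
lra.
Qed.

Lemma dominated_graph_extend G z : dominated_graph G -> G (0, 0) ->
  ~ (exists r, G (z, r)) -> exists G', dominated_graph G' /\ G `<` G'.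
Proof.
move=> DG G00 nz; have [Gcl Gfun _] := DG.
have [c Hc] := dominated_graph_gap z DG G00.
pose G' := [set p | exists u r t, G (u, r) /\ p = (u + t *: z, r + t * c)].
exists G'; split; last first.
  split; first by move=> [u r] Gu; exists u, r, 0; rewrite scale0r mul0r !addr0.
  move=> /(_ (z, c)) GG'; apply: nz; exists c; apply: GG'.
  by exists 0, 0, 1; rewrite scale1r mul1r !add0r.
split.
- move=> a _ _ _ _ [u1 [r1 [t1 [G1 [-> ->]]]]] [u2 [r2 [t2 [G2 [-> ->]]]]].
  exists (a *: u1 + u2), (a * r1 + r2), (a * t1 + t2); split; first exact: Gcl.
  by rewrite scalerDr scalerDl scalerA addrACA; congr pair; ring.
- move=> p _ _ [u1 [r1 [t1 [G1 [E1 ->]]]]] [u2 [r2 [t2 [G2 [E2 ->]]]]].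
  have t12 : t1 = t2.
    apply: contra_notP nz => /eqP; rewrite -subr_eq0 => t12.
    have zE : z = (t1 - t2)^-1 *: (-1 *: u1 + u2).
      rewrite scaleN1r (addrC (- u1)) -[u2](addrK (t2 *: z)) -E2 E1.
      by rewrite addrAC (addrC u1) addrK -scalerBl scalerA mulVf ?scale1r.
    exists ((t1 - t2)^-1 * (-1 * r1 + r2)); rewrite zE.
    by apply: dominated_graphZ => //; apply: Gcl.
  move: E2; rewrite E1 t12 => /addIr E; subst u2.
  by rewrite (Gfun _ _ _ G1 G2).
- by move=> _ _ [u [r [t [Gu [-> ->]]]]]; apply: dominated_gap_step DG G00 Hc Gu.
Qed.

Lemma dominated_graph_bigcup (F : set (set (X * R))) :
  (forall H, F H -> dominated_graph H) -> total_on F subset ->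
  dominated_graph (\bigcup_(H in F) H).
Proof.
move=> FD Ftot; split.
- move=> a u r v s [H1 F1 H1u] [H2 F2 H2v].
  have [[cl1 _ _] [cl2 _ _]] := (FD _ F1, FD _ F2).
  have [S12|S21] := Ftot _ _ F1 F2.
    by exists H2 => //; apply: cl2 (S12 _ H1u) H2v.
  by exists H1 => //; apply: cl1 H1u (S21 _ H2v).
- move=> u r s [H1 F1 H1u] [H2 F2 H2v].
  have [[_ fun1 _] [_ fun2 _]] := (FD _ F1, FD _ F2).
  have [S12|S21] := Ftot _ _ F1 F2.
    exact: fun2 (S12 _ H1u) H2v.
  exact: fun1 H1u (S21 _ H2v).
- by move=> u r [H FH Hu]; have [_ _ dom] := FD _ FH; apply: dom.
Qed.

Lemma hahn_banach G : dominated_graph G -> G (0, 0) ->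
  exists f, is_dual f /\ dnorm f <= C /\ forall u r, G (u, r) -> f u = r.
Proof.
move=> DG G00.
pose P H := dominated_graph H /\ (H = set0 \/ G `<=` H).
have [M [[DM MG] Mmax]] : exists M, P M /\ forall H, M `<` H -> ~ P H.
  apply: Zorn_bigcup => F FP Ftot.
  split; first by apply: dominated_graph_bigcup => // H /FP [].
  have [[H [FH GH]]|noH] := pselect (exists H, F H /\ G `<=` H).
    by right => p Gp; exists H => //; apply: GH.
  left; apply/seteqP; split => // p [H FH Hp].
  have [_ [H0|GH]] := FP _ FH; first by rewrite H0 in Hp.
  by case: noH; exists H.
have GM : G `<=` M.
  case: MG => // M0; case: (Mmax G); first by rewrite M0; split => // /(_ _ G00).
  by split => //; right.
have [Mcl Mfun Mdom] := DM.
have Mtot z : exists r, M (z, r).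
  apply: contrapT => nz; have [G' [DG' MG']] := dominated_graph_extend DM (GM _ G00) nz.
  by apply: (Mmax G') => //; split => //; right; apply: subset_trans (proj1 MG').
pose f z := projT1 (cid (Mtot z)).
have Mf z : M (z, f z) by rewrite /f; case: cid.
have Lf : linear_form f by move=> a x y; apply: Mfun (Mf _) (Mcl _ _ _ _ _ (Mf x) (Mf y)).
have Bf x : `|f x| <= C * `|x|.
  rewrite ler_norml Mdom ?andbT //; have := Mdom _ _ (Mf (- x)).
  by rewrite linear_formN // normrN; lra.
have [Df Cf] := bounded_linear_dual Lf C_ge0 Bf.
by exists f; split => //; split => // u r /GM; apply: Mfun.
Qed.

End HahnBanach.

Lemma sup_eq_approx (R : realType) (S : set R) (m : R) : ubound S m ->
  (forall eta, 0 < eta -> exists2 r, S r & m - eta < r) -> sup S = m.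
Proof.
move=> Sm Sapprox; have [r Sr _] := Sapprox 1 ltr01.
apply/eqP; rewrite eq_le ge_sup //=; last by exists r.
rewrite leNgt; apply/negP => Sltm; have [|t St] := Sapprox (m - sup S); first by lra.
by have := ub_le_sup (ex_intro _ m Sm) St; lra.
Qed.

Section LocallyOctahedral.
Context {R : realType} {X : normedModType R}.
Implicit Types (f g : X -> R) (x y : X).

Definition two_point_extension := forall x (alpha eps eps0 : R), `|x| = 1 ->
  -1 <= alpha <= 1 -> 0 < eps -> 0 < eps0 < eps ->
  exists y, `|y| = 1 /\
    forall gamma : R, `|gamma| <= 1 + eps0 ->
      exists f, is_dual f /\ f x = alpha /\ f y = gamma /\ dnorm f <= 1 + eps.

Definition spread_pair := forall x (alpha eps : R), `|x| = 1 ->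
  -1 <= alpha <= 1 -> 0 < eps ->
  exists y f1 f2, `|y| = 1 /\ is_dual f1 /\ is_dual f2 /\
    f1 x = alpha /\ f2 x = alpha /\ 2 - eps < f1 y - f2 y /\
    dnorm f1 <= 1 + eps /\ dnorm f2 <= 1 + eps.

Definition spread_pair1 := forall x (eps : R), `|x| = 1 -> 0 < eps ->
  exists y f1 f2, `|y| = 1 /\ is_dual f1 /\ is_dual f2 /\
    f1 x = 1 /\ f2 x = 1 /\ 2 - eps < f1 y - f2 y /\
    dnorm f1 <= 1 + eps /\ dnorm f2 <= 1 + eps.

Lemma span2_dual_extension x y (d M alpha gamma : R) : 0 < d ->
  (forall s t : R, d * (`|s| + `|t|) <= `|s *: x + t *: y|) ->
  `|alpha| <= M -> `|gamma| <= M ->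
  exists f, is_dual f /\ f x = alpha /\ f y = gamma /\ dnorm f <= M / d.
Proof.
move=> d0 K aM gM.
have M0 : 0 <= M / d by apply: divr_ge0 (le_trans (normr_ge0 _) aM) (ltW d0).
pose G := [set p : X * R | exists s t : R, p = (s *: x + t *: y, s * alpha + t * gamma)].
have DG : dominated_graph (M / d) G.
  split.
  - move=> a _ _ _ _ [s1 [t1 [-> ->]]] [s2 [t2 [-> ->]]].
    exists (a * s1 + s2), (a * t1 + t2); congr pair; last by ring.
    by rewrite scalerDr !scalerA addrACA -!scalerDl.
  - move=> _ _ _ [s1 [t1 [-> ->]]] [s2 [t2 [/eqP + ->]]].
    rewrite -subr_eq0 opprD addrACA -!scalerBl => /eqP st0.
    have := K (s1 - s2) (t1 - t2); rewrite st0 normr0.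
    have := normr_ge0 (s1 - s2); have := normr_ge0 (t1 - t2) => n1 n2 Kst.
    have /eqP : `|s1 - s2| = 0 by nra.
    have /eqP : `|t1 - t2| = 0 by nra.
    by rewrite !normr_eq0 !subr_eq0 => /eqP -> /eqP ->.
  - move=> _ _ [s [t [-> ->]]].
    have sa : s * alpha <= `|s| * M.
      by apply: le_trans (ler_norm _) _; rewrite normrM ler_wpM2l.
    have tg : t * gamma <= `|t| * M.
      by apply: le_trans (ler_norm _) _; rewrite normrM ler_wpM2l.
    have := ler_wpM2l M0 (K s t); rewrite mulrA divfK ?gt_eqF //; lra.
have G00 : G (0, 0) by exists 0, 0; rewrite !scale0r !mul0r !addr0.
have [f [Df [fM Gf]]] := hahn_banach M0 DG G00.
have Gst s t : f (s *: x + t *: y) = s * alpha + t * gamma by apply: Gf; exists s, t.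
exists f; split => //; split; last split => //.
  by have := Gst 1 0; rewrite scale1r scale0r addr0 mul1r mul0r addr0.
by have := Gst 0 1; rewrite scale1r scale0r add0r mul1r mul0r add0r.
Qed.

Lemma octahedral_span_bound x (d : R) : locally_octahedral X -> `|x| = 1 -> 0 < d < 1 ->
  exists y, `|y| = 1 /\ forall s t : R, d * (`|s| + `|t|) <= `|s *: x + t *: y|.
Proof.
move=> LO x1 /andP[d0 d1]; have [|y [y1 Hy]] := LO x (1 - d); first by lra.
exists y; split => // s t; have [->|t0] := eqVneq t 0.
  by rewrite scale0r addr0 normr0 addr0 normrZ x1 mulr1; have := normr_ge0 s; nra.
have nt : 0 < `|t| by rewrite normr_gt0.
have -> : s *: x + t *: y = t *: ((s / t) *: x + y).
  by rewrite scalerDr scalerA mulrCA mulfV // mulr1.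
have := ler_wpM2l (ltW nt) (Hy (s / t)); rewrite x1 y1 mulr1 normrM normfV normrZ.
have -> // : `|t| * ((1 - (1 - d)) * (`|s| * `|t|^-1 + 1)) = d * (`|s| + `|t|).
by field; rewrite gt_eqF.
Qed.

Lemma octahedral_two_point_extension : locally_octahedral X -> two_point_extension.
Proof.
move=> LO x alpha eps eps0 x1 /andP[alo ahi] e0 /andP[e00 e0e].
pose d := (1 + eps0) / (1 + eps).
have d0 : 0 < d by rewrite divr_gt0 //; lra.
have d1 : d < 1 by rewrite ltr_pdivrMr; lra.
have [|y [y1 K]] := octahedral_span_bound (d := d) LO x1; first by rewrite d0 d1.
exists y; split => // gamma g1.
have a1 : `|alpha| <= 1 + eps0 by rewrite ler_norml; apply/andP; lra.
have [f [Df [fx [fy fn]]]] := span2_dual_extension d0 K a1 g1.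
exists f; do !split => //; apply: le_trans fn _.
have -> : (1 + eps0) / d = 1 + eps by rewrite /d; field; lra.
exact: lexx.
Qed.

Lemma two_point_extension_spread_pair : two_point_extension -> spread_pair.
Proof.
move=> H x alpha eps x1 a1 e0.
have [|y [y1 Hy]] := H x alpha eps (eps / 2) x1 a1 e0; first by apply/andP; lra.
have [|f1 [D1 [f1x [f1y n1]]]] := Hy 1; first by rewrite normr1; lra.
have [|f2 [D2 [f2x [f2y n2]]]] := Hy (-1); first by rewrite normrN normr1; lra.
by exists y, f1, f2; do !split => //; rewrite f1y f2y; lra.
Qed.

Lemma spread_pair_spread_pair1 : spread_pair -> spread_pair1.
Proof. by move=> H x eps x1 e0; apply: H => //; apply/andP; lra. Qed.

(* [a], [b] stand for [f1 y], [f2 y] and [s + a] for [f1 (s *: u + y)] in the next lemma. *)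
Lemma spread_pair_arith (d s a b N : R) : 0 < d -> 0 <= s ->
  s + a <= (1 + d) * N -> 2 - d < a - b -> - (1 + d) <= b ->
  (1 - 4 * d) * (s + 1) <= N.
Proof. by move=> d0 s0 sN ab b1; nra. Qed.

Lemma spread_pair_lower_bound u y f1 f2 (d s : R) : 0 < d -> `|y| = 1 ->
  is_dual f1 -> is_dual f2 -> f1 u = 1 -> f2 u = 1 -> 2 - d < f1 y - f2 y ->
  dnorm f1 <= 1 + d -> dnorm f2 <= 1 + d ->
  (1 - 4 * d) * (`|s| + 1) <= `|s *: u + y|.
Proof.
move=> d0 y1 D1 D2 f1u f2u f12 n1 n2.
have [[L1 _] [L2 _]] := (D1, D2).
move: (dual_unit_bound D1 n1 y1) (dual_unit_bound D2 n2 y1).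
rewrite !ler_norml => /andP[_ f1y] /andP[f2y _].
have f1N : f1 (s *: u + y) <= (1 + d) * `|s *: u + y|.
  by apply: le_trans (ler_norm _) (le_trans (ler_dnorm _ D1) _); rewrite ler_wpM2r.
have f2N : - f2 (s *: u + y) <= (1 + d) * `|s *: u + y|.
  apply: le_trans (ler_norm _) _; rewrite normrN.
  by apply: le_trans (ler_dnorm _ D2) _; rewrite ler_wpM2r.
rewrite L1 f1u mulr1 in f1N; rewrite L2 f2u mulr1 opprD in f2N.
have [s0|s0] := leP 0 s.
  by rewrite ger0_norm //; apply: spread_pair_arith d0 s0 f1N f12 f2y.
rewrite ltr0_norm //; apply: (spread_pair_arith (a := - f2 y) (b := - f1 y)) => //; lra.
Qed.

Lemma locally_octahedral_unit : (exists x : X, x != 0) ->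
  (forall x (eps : R), `|x| = 1 -> 0 < eps ->
    exists y, `|y| = 1 /\ forall s : R, (1 - eps) * (`|s| + 1) <= `|s *: x + y|) ->
  locally_octahedral X.
Proof.
move=> [z z0] H x eps e0; have [->|x0] := eqVneq x 0.
  exists (`|z|^-1 *: z); split => [|s]; rewrite normr_normalize //.
  by rewrite normr0 mulr0 add0r scaler0 add0r normr_normalize //; lra.
have [y [y1 Hy]] := H _ _ (normr_normalize x0) e0.
exists y; split => // s; have := Hy (s * `|x|).
by rewrite scalerA mulfK ?normr_eq0 // normrM normr_id y1.
Qed.

Lemma spread_pair1_octahedral : (exists x : X, x != 0) -> spread_pair1 ->
  locally_octahedral X.
Proof.
move=> nt H; apply: locally_octahedral_unit => // x eps x1 e0.
have [|y [f1 [f2 [y1 [D1 [D2 [f1x [f2x [f12 [n1 n2]]]]]]]]]] := H x (eps / 4) x1.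
  by lra.
exists y; split => // s; have := spread_pair_lower_bound s _ y1 D1 D2 f1x f2x f12 n1 n2.
have -> : 4 * (eps / 4) = eps by field.
by apply; lra.
Qed.

Lemma rescaled_in_wstar_slice f x (alpha d : R) : is_dual f -> dnorm f <= 1 + d ->
  f x = 1 -> 0 < d <= alpha -> wstar_slice x alpha (fun z => f z / (1 + d)).
Proof.
move=> Df nf fx /andP[d0 da]; have d1 : 0 < 1 + d by lra.
have [Dg ng] := dual_divr Df d1; split => //; split.
  by apply: le_trans ng _; rewrite ler_pdivrMr // mul1r.
by rewrite fx ltr_pdivlMr //; nra.
Qed.

Lemma spread_pair_wstar_LD2P : spread_pair -> wstar_LD2P X.
Proof.
move=> H x alpha x1 a0; apply: sup_eq_approx.
  move=> _ [f [g [[Df [nf _]] [[Dg [ng _]] ->]]]].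
  by have [_] := dualB Df Dg; lra.
move=> eta eta0; pose d := Num.min alpha eta / 3.
have m0 : 0 < Num.min alpha eta by rewrite lt_min a0.
have [ma me] : Num.min alpha eta <= alpha /\ Num.min alpha eta <= eta.
  by rewrite !ge_min !lexx orbT.
have [d0 da de] : [/\ 0 < d, d <= alpha & d <= eta / 3] by split; rewrite /d; lra.
have [|y [f1 [f2 [y1 [D1 [D2 [f1x [f2x [f12 [n1 n2]]]]]]]]]] := H x 1 d x1 _ d0.
  by apply/andP; lra.
have d1 : 0 < 1 + d by lra.
have [[G1 _] [G2 _]] := (dual_divr D1 d1, dual_divr D2 d1).
have [G12 _] := dualB G1 G2.
exists (dnorm (fun z => f1 z / (1 + d) - f2 z / (1 + d))).
  exists (fun z => f1 z / (1 + d)), (fun z => f2 z / (1 + d)).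
  by split; [|split]; [apply: rescaled_in_wstar_slice; rewrite ?d0..|].
have y1' : `|y| <= 1 by rewrite y1.
apply: (lt_le_trans _ (le_trans (ler_norm _) (le_dnorm G12 y1'))).
rewrite -mulrBl ltr_pdivlMr //; nra.
Qed.

Lemma dual_diam_gt (A : set (X -> R)) (a : R) : 0 <= a -> a < dual_diam A ->
  exists f g, A f /\ A g /\ a < dnorm (fun z => f z - g z).
Proof.
move=> a0 aS; rewrite /dual_diam in aS; set S := [set r | _] in aS.
have [S0|S0] := pselect (S !=set0); last first.
  by move: aS; rewrite (_ : S = set0) ?sup0; [lra | apply/seteqP; split => // r Sr; apply: S0; exists r].
by have [_ [f [g [Af [Ag ->]]]] ar] := sup_gt S0 aS; exists f, g.
Qed.

Lemma wstar_LD2P_spread_pair1 : wstar_LD2P X -> spread_pair1.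
Proof.
move=> W x eps x1 e0; pose d := eps / (2 + 2 * eps).
have d0 : 0 < d by rewrite divr_gt0 //; lra.
have dE : d * (2 + 2 * eps) = eps by rewrite /d; field; lra.
have [d12 de] : 2 * d < 1 /\ d <= eps by split; nra.
have d2 : 2 - d < dual_diam (wstar_slice x d) by rewrite W //; lra.
have [|f [g [[Df [nf fx]] [[Dg [ng gx]] fg]]]] := dual_diam_gt _ d2; first by lra.
have [Dfg _] := dualB Df Dg.
have [|y [y1 fgy]] := dnorm_gt_unit Dfg _ fg; first by lra.
move: (dual_unit_bound Df nf y1) (dual_unit_bound Dg ng y1).
move: (dual_unit_bound Df nf x1) (dual_unit_bound Dg ng x1).
rewrite !ler_norml => /andP[_ fx1] /andP[_ gx1] /andP[_ fy1] /andP[gy1 _].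
have normalize h : is_dual h -> dnorm h <= 1 -> 1 - d < h x ->
    is_dual (fun z => h z / h x) /\ dnorm (fun z => h z / h x) <= 1 + eps.
  move=> Dh nh hx; have hx0 : 0 < h x by lra.
  have [Dh' nh'] := dual_divr Dh hx0; split => //; apply: le_trans nh' _.
  by rewrite ler_pdivrMr //; nra.
have [[Df' nf'] [Dg' ng']] := (normalize f Df nf fx, normalize g Dg ng gx).
exists y, (fun z => f z / f x), (fun z => g z / g x); do !split => //=.
- by rewrite mulfV // gt_eqF //; lra.
- by rewrite mulfV // gt_eqF //; lra.
have fyx : f y <= f y / f x by rewrite ler_pdivlMr; nra.
have gyx : g y / g x <= g y by rewrite ler_pdivrMr; nra.
lra.
Qed.

End LocallyOctahedral.

Theorem theorem3p1 (R : realType) (X : completeNormedModType R)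
  (nontriv : exists x : X, x != 0) :
  let iii := forall (x : X) (alpha eps eps0 : R), `|x| = 1 ->
      -1 <= alpha <= 1 -> 0 < eps -> 0 < eps0 < eps ->
      exists y : X, `|y| = 1 /\
        forall gamma : R, `|gamma| <= 1 + eps0 ->
          exists f : X -> R, is_dual f /\ f x = alpha /\ f y = gamma /\
            dnorm f <= 1 + eps in
  let iii' := forall (x : X) (alpha eps : R), `|x| = 1 ->
      -1 <= alpha <= 1 -> 0 < eps ->
      exists (y : X) (f1 f2 : X -> R), `|y| = 1 /\ is_dual f1 /\ is_dual f2 /\
        f1 x = alpha /\ f2 x = alpha /\ 2 - eps < f1 y - f2 y /\
        dnorm f1 <= 1 + eps /\ dnorm f2 <= 1 + eps in
  let iii'' := forall (x : X) (eps : R), `|x| = 1 -> 0 < eps ->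
      exists (y : X) (f1 f2 : X -> R), `|y| = 1 /\ is_dual f1 /\ is_dual f2 /\
        f1 x = 1 /\ f2 x = 1 /\ 2 - eps < f1 y - f2 y /\
        dnorm f1 <= 1 + eps /\ dnorm f2 <= 1 + eps in
  (wstar_LD2P X <-> locally_octahedral X) /\
  (locally_octahedral X <-> iii) /\
  (iii <-> iii') /\
  (iii' <-> iii'').
Proof.
move=> iii iii' iii''.
have lo_iii : locally_octahedral X -> iii := octahedral_two_point_extension.
have iii_iii' : iii -> iii' := two_point_extension_spread_pair.
have iii'_iii'' : iii' -> iii'' := spread_pair_spread_pair1.
have iii''_lo : iii'' -> locally_octahedral X := spread_pair1_octahedral nontriv.
have iii'_ld2p : iii' -> wstar_LD2P X := spread_pair_wstar_LD2P.
have ld2p_iii'' : wstar_LD2P X -> iii'' := wstar_LD2P_spread_pair1.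
by split; [|split; [|split]]; split; auto.
Qed.
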